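(* For $k\in\{0,1,2\}$ let $U_k=\begin{pmatrix}\cos(2k\pi/3)&-\sin(2k\pi/3)\\ \sin(2k\pi/3)&\cos(2k\pi/3)\end{pmatrix}$, let $|+\rangle=(1,0)$, $|-\rangle=(0,1)$. For $\lambda\in(0,1)$ define the POVM $\mathsf E^\lambda$ by $E^\lambda_k=\lambda\,\tfrac23U_k|+\rangle\langle+|U_k^*+(1-\lambda)\tfrac13\mathbb 1$, and for $\eta\in[0,1]$ define $\mathsf B^\eta$ by $B^\eta_k=U_kB^\eta_0U_k^*$ with $B^\eta_0=\eta\,\tfrac23|-\rangle\langle-|+(1-\eta)\tfrac13\mathbb 1$. If $$\eta\le \frac{\lambda^2}{2\left(1-\sqrt{1-\lambda^2}\right)},$$ then $\mathsf E^\lambda$ and $\mathsf B^\eta$ are jointly measurable. In particular, for $\eta=\lambda$ they are jointly measurable whenever $\lambda\le 4/5$.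
   Context: Two POVMs $(E_k)_{k=0}^2$, $(B_j)_{j=0}^2$ on $\mathbb C^2$ are jointly measurable if there is a POVM $(N_{kj})$ with $\sum_jN_{kj}=E_k$ and $\sum_kN_{kj}=B_j$. *)

From HB Require Import structures.
From mathcomp Require Import all_boot all_order all_algebra.
From mathcomp Require Import all_classical all_reals.
From mathcomp Require Import trigo.
From mathcomp.real_closed Require Import complex.

Set Implicit Arguments. Unset Strict Implicit. Unset Printing Implicit Defensive.
Import Order.TTheory GRing.Theory Num.Theory.
Local Open Scope ring_scope.
Local Open Scope complex_scope.

Section Qubit.
Variable R : realType.
Local Notation C := R[i].

Definition adj (m n : nat) (A : 'M[C]_(m, n)) : 'M[C]_(n, m) :=
  (map_mx Num.conj A)^T.

Definition psd (A : 'M[C]_2) : Prop :=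
  forall v : 'cV[C]_2, 0 <= (adj v *m A *m v) 0 0.

Definition POVM (I : finType) (E : I -> 'M[C]_2) : Prop :=
  (forall i, psd (E i)) /\ \sum_(i : I) E i = 1%:M.

Definition jointly_measurable (E B : 'I_3 -> 'M[C]_2) : Prop :=
  exists N : 'I_3 * 'I_3 -> 'M[C]_2,
    POVM N /\
    (forall k : 'I_3, \sum_(j : 'I_3) N (k, j) = E k) /\
    (forall j : 'I_3, \sum_(k : 'I_3) N (k, j) = B j).

Definition cmx (m n : nat) (A : 'M[R]_(m, n)) : 'M[C]_(m, n) :=
  map_mx (fun x => x%:C) A.

Definition U (k : 'I_3) : 'M[C]_2 :=
  let t := (2 * k%:R * pi / 3 : R) in
  cmx (\matrix_(i < 2, j < 2)
         if (i == 0) && (j == 0) then cos t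
         else if (i == 0) && (j == 1) then - sin t
         else if (i == 1) && (j == 0) then sin t
         else cos t).

Definition ketp : 'cV[C]_2 := \col_(i < 2) (if i == 0 then 1 else 0).
Definition ketm : 'cV[C]_2 := \col_(i < 2) (if i == 0 then 0 else 1).

Definition Elam (lam : R) (k : 'I_3) : 'M[C]_2 :=
  (lam * 2 / 3)%:C *: (U k *m ketp *m adj ketp *m adj (U k))
  + ((1 - lam) / 3)%:C *: 1%:M.

Definition B0 (eta : R) : 'M[C]_2 :=
  (eta * 2 / 3)%:C *: (ketm *m adj ketm) + ((1 - eta) / 3)%:C *: 1%:M.

Definition Beta (eta : R) (k : 'I_3) : 'M[C]_2 :=
  U k *m B0 eta *m adj (U k).

End Qubit.

From HB Require Import structures.
From mathcomp Require Import all_boot all_order all_algebra.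
From mathcomp Require Import all_classical all_reals.
From mathcomp Require Import trigo.
From mathcomp.real_closed Require Import complex.
From mathcomp Require Import ring lra.
Set Implicit Arguments. Unset Strict Implicit. Unset Printing Implicit Defensive.
Import Order.TTheory GRing.Theory Num.Theory.
Local Open Scope ring_scope.
Local Open Scope complex_scope.

(* Both POVMs are real: E_k = (1 + lam n_k.sigma) / 3 and B_k = (1 - eta n_k.sigma) / 3,
   where the Bloch vectors n_k of the trine are unit vectors at 120 degrees summing to 0
   (conjugation by the rotation U_k turns Bloch vectors by twice its angle).
   Put s = sqrt (1 - lam^2).  For eta0 = (1 + s) / 2 a joint POVM is given explicitly by
   N_kk = (al / 3) (1 - n_k.sigma) and N_kj = w 1 + (u n_k + v n_j).sigma for k <> j;
   its marginals are E and B^eta0, and its positivity reduces to the scalar inequality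
   u^2 + v^2 - u v <= w^2, which holds for al = max 0 ((s - 2 lam) / 3).  Every smaller
   eta is reached by mixing B^eta0 with the trivial POVM 1/3, and mixing with noise
   preserves joint measurability.  Finally lam^2 / (2 (1 - s)) = (1 + s) / 2, and
   s >= 3/5 when lam <= 4/5. *)

Section QubitMatrices.
Variable R : realType.
Local Notation C := R[i].

Lemma cmxM m n p (A : 'M[R]_(m, n)) (B : 'M[R]_(n, p)) :
  cmx (A *m B) = cmx A *m cmx B.
Proof. exact: (map_mxM (real_complex R)). Qed.

Lemma cmxD m n (A B : 'M[R]_(m, n)) : cmx (A + B) = cmx A + cmx B.
Proof. exact: (map_mxD (real_complex R)). Qed.

Lemma cmxZ m n (a : R) (A : 'M[R]_(m, n)) : cmx (a *: A) = a%:C *: cmx A.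
Proof. exact: (map_mxZ (real_complex R)). Qed.

Lemma cmx1 n : cmx (1%:M : 'M[R]_n) = 1%:M.
Proof. exact: (map_mx1 (real_complex R)). Qed.

Lemma cmx_sum m n (I : finType) (F : I -> 'M[R]_(m, n)) :
  cmx (\sum_i F i) = \sum_i cmx (F i).
Proof. exact: (map_mx_sum (real_complex R)). Qed.

Lemma cmx_adj m n (A : 'M[R]_(m, n)) : adj (cmx A) = cmx A^T.
Proof. by apply/matrixP => i j; rewrite !mxE; exact: conjc_real. Qed.

Lemma psd_cmx_sym2 (A : 'M[R]_2) :
  A 0 1 = A 1 0 -> 0 <= A 0 0 -> 0 <= A 1 1 -> A 0 1 ^+ 2 <= A 0 0 * A 1 1 ->
  psd (cmx A).
Proof.
move=> sym p_ge0 t_ge0 det_ge0 v.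
rewrite !mxE !big_ord_recl !big_ord0 /= !mxE !big_ord_recl !big_ord0 /= !mxE /=.
have -> : lift ord0 ord0 = 1 :> 'I_2 by apply: val_inj.
rewrite -sym; move: p_ge0 t_ge0 det_ge0.
set p := A 0 0; set t := A 1 1; set q := A 0 1 => p_ge0 t_ge0 det_ge0.
case: (v 0 0) => a b; case: (v 1 0) => c d; rewrite lecE /=.
apply/andP; split; first by apply/eqP; ring.
have form : forall x y, 0 <= p * x ^+ 2 + 2 * q * x * y + t * y ^+ 2.
  move=> x y; have [p0|p_neq0] := eqVneq p 0.
    have q0 : q = 0.
      by apply/eqP; rewrite -sqrf_eq0 eq_le sqr_ge0 andbT -(mul0r t) -p0.
    by rewrite p0 q0 !(mul0r, mulr0, add0r) mulr_ge0 ?sqr_ge0.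
  have p_gt0 : 0 < p by rewrite lt_def p_neq0.
  rewrite -(pmulr_rge0 _ p_gt0).
  have -> : p * (p * x ^+ 2 + 2 * q * x * y + t * y ^+ 2) =
            (p * x + q * y) ^+ 2 + (p * t - q ^+ 2) * y ^+ 2 by ring.
  apply: addr_ge0; first exact: sqr_ge0.
  by rewrite mulr_ge0 ?sqr_ge0 ?subr_ge0.
apply: le_trans (addr_ge0 (form a c) (form b d)) _.
by rewrite le_eqVlt; apply/orP; left; apply/eqP; ring.
Qed.

Lemma psdD (A B : 'M[C]_2) : psd A -> psd B -> psd (A + B).
Proof.
by move=> psdA psdB v; rewrite mulmxDr mulmxDl mxE addr_ge0 ?psdA ?psdB.
Qed.

Lemma psdZ (c : R) (A : 'M[C]_2) : 0 <= c -> psd A -> psd (c%:C *: A).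
Proof.
move=> c_ge0 psdA v; rewrite -scalemxAr -scalemxAl mxE mulr_ge0 ?psdA //.
by rewrite lecE /= eqxx.
Qed.

(* [bloch a z x] is a 1 + z sigma_z + x sigma_x. *)
Definition bloch (a z x : R) : 'M[R]_2 :=
  \matrix_(i, j) if i == j then (if i == 0 then a + z else a - z) else x.

Lemma blochD a z x a' z' x' :
  bloch a z x + bloch a' z' x' = bloch (a + a') (z + z') (x + x').
Proof.
apply/matrixP => i j; rewrite !mxE.
by case: ifP => _; [case: ifP => _|]; ring.
Qed.

Lemma blochZ c a z x : c *: bloch a z x = bloch (c * a) (c * z) (c * x).
Proof.
apply/matrixP => i j; rewrite !mxE.
by case: ifP => _; [case: ifP => _|]; ring.
Qed.

Lemma bloch1 : bloch 1 0 0 = 1%:M.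
Proof.
apply/matrixP => i j; rewrite !mxE eq_sym.
by case: ifP => _; [case: ifP => _|]; rewrite ?addr0 ?subr0 ?mulr1n ?mulr0n.
Qed.

Lemma bloch_sum (I : Type) (r : seq I) (P : pred I) (a z x : I -> R) :
  \sum_(i <- r | P i) bloch (a i) (z i) (x i) =
  bloch (\sum_(i <- r | P i) a i) (\sum_(i <- r | P i) z i) (\sum_(i <- r | P i) x i).
Proof.
apply/matrixP => i j; rewrite summxE mxE; under eq_bigr do rewrite mxE.
by case: ifP => _; [case: ifP => _|]; rewrite ?sumrB ?big_split.
Qed.

Lemma psd_bloch a z x : 0 <= a -> z ^+ 2 + x ^+ 2 <= a ^+ 2 -> psd (cmx (bloch a z x)).
Proof. by move=> a_ge0 r_le; apply: psd_cmx_sym2; rewrite !mxE //=; nra. Qed.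

Definition rot (t : R) : 'M[R]_2 :=
  \matrix_(i < 2, j < 2)
     if (i == 0) && (j == 0) then cos t
     else if (i == 0) && (j == 1) then - sin t
     else if (i == 1) && (j == 0) then sin t
     else cos t.

Lemma rot_bloch t a z x :
  rot t *m bloch a z x *m (rot t)^T =
  bloch a (z * cos (t *+ 2) - x * sin (t *+ 2)) (z * sin (t *+ 2) + x * cos (t *+ 2)).
Proof.
rewrite mulr2n cosD sinD.
have unit_a : a * (cos t ^+ 2 + sin t ^+ 2) = a by rewrite cos2Dsin2 mulr1.
apply/matrixP => i j; rewrite !mxE !big_ord_recl !big_ord0 !mxE /=.
rewrite !big_ord_recl !big_ord0 !mxE /=.
by case: i => [[|[|//]] ?]; case: j => [[|[|//]] ?]; rewrite /=; lra.
Qed.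

End QubitMatrices.

Section Trine.
Variable R : realType.

Lemma cos_pi3 : cos (pi / 3) = 1 / 2 :> R.
Proof.
set c := cos (pi / 3).
have pi_pos := @pi_gt0 R.
have c_gt0 : 0 < c by apply: cos_gt0_pihalf; apply/andP; split; lra.
have sin_sqr : c * sin (pi / 3) ^+ 2 = c * (1 - c ^+ 2) by rewrite sin2cos2.
have triple : cos pi = c * (4 * c ^+ 2 - 3).
  have -> : pi = pi / 3 + pi / 3 + pi / 3 :> R by field.
  by rewrite !cosD !sinD -/c; lra.
have : (c + 1) * (2 * c - 1) ^+ 2 = 0 by move: triple; rewrite cospi; lra.
by move/eqP; rewrite mulf_eq0 sqrf_eq0 => /orP[] /eqP; lra.
Qed.

Lemma sin_pi3_sqr : sin (pi / 3) ^+ 2 = 3 / 4 :> R.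
Proof. by rewrite sin2cos2 cos_pi3; field. Qed.

Definition trine_angle (k : 'I_3) : R := 2 * k%:R * pi / 3.

Definition trine_z (k : 'I_3) : R := if val k == 0%N then 1 else - (1 / 2).

Definition trine_x (k : 'I_3) : R :=
  if val k == 0%N then 0 else if val k == 1%N then - sin (pi / 3) else sin (pi / 3).

Lemma cos_sin_trine k :
  cos (trine_angle k *+ 2) = trine_z k /\ sin (trine_angle k *+ 2) = trine_x k.
Proof.
rewrite /trine_angle /trine_z /trine_x.
case: k => [[|[|[|//]]] ?] /=.
- by rewrite !mulr0 !mul0r mul0rn cos0 sin0.
- have -> : (2 * 1%:R * pi / 3) *+ 2 = pi / 3 + pi :> R by rewrite mulr2n; field.
  by rewrite cosDpi sinDpi cos_pi3.
- have -> : (2 * 2%:R * pi / 3) *+ 2 = (- (pi / 3) + pi) + pi *+ 2 :> R.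
    by rewrite !mulr2n; field.
  by rewrite cosD2pi sinD2pi cosDpi sinDpi cosN sinN cos_pi3 opprK.
Qed.

Lemma trine_norm k : trine_z k ^+ 2 + trine_x k ^+ 2 = 1.
Proof. by have [<- <-] := cos_sin_trine k; rewrite cos2Dsin2. Qed.

Lemma trine_dot k j : k != j -> trine_z k * trine_z j + trine_x k * trine_x j = - (1 / 2).
Proof.
have := sin_pi3_sqr; rewrite /trine_z /trine_x.
by case: k => [[|[|[|//]]] ?]; case: j => [[|[|[|//]]] ?]; rewrite /= //; lra.
Qed.

Lemma trine_sum_z : \sum_k trine_z k = 0.
Proof. by rewrite !big_ord_recl big_ord0 /trine_z /=; lra. Qed.

Lemma trine_sum_x : \sum_k trine_x k = 0.
Proof. by rewrite !big_ord_recl big_ord0 /trine_x /=; lra. Qed.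

Lemma U_rot k : U R k = cmx (rot (trine_angle k)).
Proof. by []. Qed.

Lemma ketp_proj : ketp R *m adj (ketp R) = cmx (bloch (1 / 2) (1 / 2) 0).
Proof.
have -> : ketp R = cmx (\col_i (if i == 0 then 1 else 0)).
  by apply/matrixP => i j; rewrite !mxE; case: ifP.
rewrite cmx_adj -cmxM; congr cmx; apply/matrixP => i j.
rewrite !mxE big_ord1 !mxE.
by case: i => [[|[|//]] ?]; case: j => [[|[|//]] ?]; rewrite /=; lra.
Qed.

Lemma ketm_proj : ketm R *m adj (ketm R) = cmx (bloch (1 / 2) (- (1 / 2)) 0).
Proof.
have -> : ketm R = cmx (\col_i (if i == 0 then 0 else 1)).
  by apply/matrixP => i j; rewrite !mxE; case: ifP.
rewrite cmx_adj -cmxM; congr cmx; apply/matrixP => i j.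
rewrite !mxE big_ord1 !mxE.
by case: i => [[|[|//]] ?]; case: j => [[|[|//]] ?]; rewrite /=; lra.
Qed.

Lemma Elam_bloch (lam : R) k :
  Elam lam k = cmx (bloch (1 / 3) (lam / 3 * trine_z k) (lam / 3 * trine_x k)).
Proof.
rewrite /Elam U_rot -(mulmxA _ (ketp R)) ketp_proj cmx_adj -!cmxM rot_bloch.
have [-> ->] := cos_sin_trine k.
rewrite -cmx1 -bloch1 -!cmxZ -cmxD !blochZ blochD; congr (cmx (bloch _ _ _)); lra.
Qed.

Lemma B0_bloch (eta : R) : B0 eta = cmx (bloch (1 / 3) (- (eta / 3)) 0).
Proof.
rewrite /B0 ketm_proj -cmx1 -bloch1 -!cmxZ -cmxD !blochZ blochD.
congr (cmx (bloch _ _ _)); lra.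
Qed.

Lemma Beta_bloch (eta : R) k :
  Beta eta k = cmx (bloch (1 / 3) (- (eta / 3) * trine_z k) (- (eta / 3) * trine_x k)).
Proof.
rewrite /Beta B0_bloch U_rot cmx_adj -!cmxM rot_bloch.
by have [-> ->] := cos_sin_trine k; congr (cmx (bloch _ _ _)); lra.
Qed.

Lemma Elam_sum (lam : R) : \sum_k Elam lam k = 1%:M.
Proof.
under eq_bigr do rewrite Elam_bloch.
rewrite -cmx_sum bloch_sum -!mulr_sumr trine_sum_z trine_sum_x sumr_const card_ord.
by rewrite mulr0 -cmx1 -bloch1; congr (cmx (bloch _ _ _)); lra.
Qed.

Lemma Elam_POVM (lam : R) : -1 <= lam <= 1 -> POVM (Elam lam).
Proof.
move=> lam_bound; split; last exact: Elam_sum.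
move=> k; rewrite Elam_bloch; apply: psd_bloch; first lra.
by rewrite !exprMn -mulrDr trine_norm mulr1; nra.
Qed.

Lemma Beta_mix (eta t : R) :
  Beta (t * eta) = (fun j => t%:C *: Beta eta j + ((1 - t) / 3)%:C *: 1%:M).
Proof.
apply: funext => j; rewrite !Beta_bloch -cmx1 -bloch1 -!cmxZ -cmxD !blochZ blochD.
by congr (cmx (bloch _ _ _)); lra.
Qed.

Lemma trine_pair_norm u v k j : k != j ->
  (u * trine_z k + v * trine_z j) ^+ 2 + (u * trine_x k + v * trine_x j) ^+ 2 =
  u ^+ 2 + v ^+ 2 - u * v.
Proof.
move=> neq_kj.
have -> : (u * trine_z k + v * trine_z j) ^+ 2 + (u * trine_x k + v * trine_x j) ^+ 2 =
  u ^+ 2 * (trine_z k ^+ 2 + trine_x k ^+ 2) + v ^+ 2 * (trine_z j ^+ 2 + trine_x j ^+ 2)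
  + 2 * u * v * (trine_z k * trine_z j + trine_x k * trine_x j) by ring.
by rewrite !trine_norm trine_dot //; field.
Qed.

End Trine.

Arguments trine_z {R} k.
Arguments trine_x {R} k.

Section JointMeasurability.
Variable R : realType.
Local Notation C := R[i].

Lemma jointly_measurable_of_psd (E B : 'I_3 -> 'M[C]_2) (N : 'I_3 * 'I_3 -> 'M[C]_2) :
  \sum_k E k = 1%:M -> (forall kj, psd (N kj)) ->
  (forall k, \sum_j N (k, j) = E k) -> (forall j, \sum_k N (k, j) = B j) ->
  jointly_measurable E B.
Proof.
move=> sumE psdN margE margB; exists N; do !split => //.
rewrite (eq_bigr (fun kj => N (kj.1, kj.2))); last by case.
by rewrite -(pair_big xpredT xpredT (fun k j => N (k, j))) -sumE; apply: eq_bigr.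
Qed.

Lemma jointly_measurable_mix (E B : 'I_3 -> 'M[C]_2) (t : R) :
  POVM E -> 0 <= t <= 1 -> jointly_measurable E B ->
  jointly_measurable E (fun j => t%:C *: B j + ((1 - t) / 3)%:C *: 1%:M).
Proof.
move=> [psdE sumE] t_bound [N [[psdN _] [margE margB]]].
apply: (@jointly_measurable_of_psd _ _
  (fun kj => t%:C *: N kj + ((1 - t) / 3)%:C *: E kj.1)) => //.
- by move=> kj; apply: psdD; apply: psdZ => //; lra.
- move=> k /=; rewrite big_split /= -scaler_sumr margE sumr_const card_ord.
  rewrite scalerMnl -scalerDl -rmorphMn -rmorphD.
  by rewrite (_ : t + _ = 1) ?scale1r //; lra.
- by move=> j /=; rewrite big_split /= -!scaler_sumr margB sumE.
Qed.

Lemma sum_ord3_neq (F : 'I_3 -> R) k : \sum_(j | j != k) F j = \sum_j F j - F k.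
Proof. by rewrite [X in _ = X - _](bigD1 k) //= addrAC subrr add0r. Qed.

Lemma sum_ord3_affine (n : 'I_3 -> R) c v :
  \sum_i n i = 0 -> \sum_i (c + v * n i) = c *+ 3.
Proof.
by move=> n0; rewrite big_split /= -mulr_sumr n0 mulr0 addr0 sumr_const card_ord.
Qed.

Section TrineJoint.
Variables lam eta al : R.

(* u and v are forced by the marginals: 2 u - v = (lam + al) / 3 and 2 v - u = (al - eta) / 3. *)
Definition joint_u : R := (2 * lam + 3 * al - eta) / 9.
Definition joint_v : R := (lam + 3 * al - 2 * eta) / 9.
Definition joint_w : R := (1 - al) / 6.

Definition trine_joint (kj : 'I_3 * 'I_3) : 'M[C]_2 :=
  let: (k, j) := kj in
  cmx (if k == j then bloch (al / 3) (- (al / 3) * trine_z k) (- (al / 3) * trine_x k)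
       else bloch joint_w (joint_u * trine_z k + joint_v * trine_z j)
                          (joint_u * trine_x k + joint_v * trine_x j)).

Lemma trine_joint_marginal_E k : \sum_j trine_joint (k, j) = Elam lam k.
Proof.
rewrite Elam_bloch -cmx_sum (bigD1 k) //= eqxx.
rewrite (eq_bigr (fun j => bloch joint_w (joint_u * trine_z k + joint_v * trine_z j)
                                         (joint_u * trine_x k + joint_v * trine_x j))).
  rewrite bloch_sum blochD !sum_ord3_neq !sum_ord3_affine ?trine_sum_z ?trine_sum_x //.
  rewrite sumr_const card_ord /joint_u /joint_v /joint_w.
  by congr (cmx (bloch _ _ _)); lra.
by move=> j; rewrite eq_sym => /negbTE ->.
Qed.

Lemma trine_joint_marginal_B j : \sum_k trine_joint (k, j) = Beta eta j.
Proof.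
rewrite Beta_bloch -cmx_sum (bigD1 j) //= eqxx.
rewrite (eq_bigr (fun k => bloch joint_w (joint_v * trine_z j + joint_u * trine_z k)
                                         (joint_v * trine_x j + joint_u * trine_x k))).
  rewrite bloch_sum blochD !sum_ord3_neq !sum_ord3_affine ?trine_sum_z ?trine_sum_x //.
  rewrite sumr_const card_ord /joint_u /joint_v /joint_w.
  by congr (cmx (bloch _ _ _)); lra.
by move=> k /negbTE ->; congr bloch; apply: addrC.
Qed.

Hypotheses (al_ge0 : 0 <= al) (al_le1 : al <= 1)
  (offdiag_radius : joint_u ^+ 2 + joint_v ^+ 2 - joint_u * joint_v <= joint_w ^+ 2).

Lemma trine_joint_psd kj : psd (trine_joint kj).
Proof.
case: kj => k j /=; case: eqP => [_|/eqP neq_kj]; apply: psd_bloch.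
- exact: divr_ge0.
- by rewrite !exprMn -mulrDr trine_norm mulr1 sqrrN exprMn.
- by rewrite /joint_w divr_ge0 // subr_ge0.
- by rewrite trine_pair_norm.
Qed.

Lemma jointly_measurable_trine : jointly_measurable (Elam lam) (Beta eta).
Proof.
exact: jointly_measurable_of_psd (Elam_sum lam) trine_joint_psd
  trine_joint_marginal_E trine_joint_marginal_B.
Qed.

End TrineJoint.

Lemma trine_joint_feasible (lam s : R) :
  0 < lam < 1 -> 0 <= s -> s ^+ 2 = 1 - lam ^+ 2 ->
  let eta := (1 + s) / 2 in
  exists2 al, 0 <= al <= 1 &
    joint_u lam eta al ^+ 2 + joint_v lam eta al ^+ 2 - joint_u lam eta al * joint_v lam eta al
    <= joint_w al ^+ 2.
Proof.
move=> /andP[lam_gt0 lam_lt1] s_ge0 s_sqr eta; rewrite /joint_u /joint_v /joint_w /eta.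
have s_le1 : s <= 1 by nra.
have [le_2lam_s|lt_s_2lam] := lerP (2 * lam) s.
  by exists ((s - 2 * lam) / 3); [apply/andP; split; lra | nra].
by exists 0; [apply/andP; split; lra | nra].
Qed.

Lemma jointly_measurable_Elam_Beta (lam s eta : R) :
  0 < lam < 1 -> 0 <= s -> s ^+ 2 = 1 - lam ^+ 2 -> 0 <= eta -> eta <= (1 + s) / 2 ->
  jointly_measurable (Elam lam) (Beta eta).
Proof.
move=> lam_bound s_ge0 s_sqr eta_ge0 eta_le.
have [al /andP[al_ge0 al_le1] radius] := trine_joint_feasible lam_bound s_ge0 s_sqr.
have es_gt0 : 0 < (1 + s) / 2 by lra.
have -> : eta = eta / ((1 + s) / 2) * ((1 + s) / 2) by rewrite divfK ?gt_eqF.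
rewrite Beta_mix; apply: jointly_measurable_mix.
- by apply: Elam_POVM; case/andP: lam_bound => *; apply/andP; split; lra.
- apply/andP; split; first exact: divr_ge0 (ltW es_gt0).
  by rewrite ler_pdivrMr // mul1r.
- exact: jointly_measurable_trine radius.
Qed.

End JointMeasurability.

Lemma sqr_over_twice_one_sub (F : numFieldType) (x s : F) :
  s ^+ 2 = 1 - x ^+ 2 -> s != 1 -> x ^+ 2 / (2 * (1 - s)) = (1 + s) / 2.
Proof.
move=> s_sqr s_neq1; have -> : x ^+ 2 = 1 - s ^+ 2 by rewrite s_sqr; ring.
by field; rewrite subr_eq0 eq_sym.
Qed.

Theorem mainTheorem5 (R : realType) :
  (forall lam eta : R, 0 < lam < 1 -> 0 <= eta <= 1 ->
     eta <= lam ^+ 2 / (2 * (1 - Num.sqrt (1 - lam ^+ 2))) ->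
     jointly_measurable (Elam lam) (Beta eta)) /\
  (forall lam : R, 0 < lam < 1 -> lam <= 4 / 5 ->
     jointly_measurable (Elam lam) (Beta lam)).
Proof.
split=> [lam eta /[dup] lam_bound /andP[lam_gt0 lam_lt1] /andP[eta_ge0 _]|
         lam /[dup] lam_bound /andP[lam_gt0 lam_lt1] lam_le];
  set s := Num.sqrt (1 - lam ^+ 2); have s_ge0 : 0 <= s := sqrtr_ge0 _;
  have s_sqr : s ^+ 2 = 1 - lam ^+ 2 by rewrite sqr_sqrtr //; nra.
- rewrite sqr_over_twice_one_sub //; last by apply/eqP => s1; move: s_sqr; rewrite s1; nra.
  exact: jointly_measurable_Elam_Beta lam_bound s_ge0 s_sqr eta_ge0.
- apply: (jointly_measurable_Elam_Beta lam_bound s_ge0 s_sqr); first exact: ltW.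
  suff : 3 / 5 <= s by lra.
  nra.
Qed.
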